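(* Every Čech-complete (in particular, every compact) Tychonoff $\Delta$-space is scattered. Equivalently, if $X$ is Čech-complete and $C_p(X)$ is distinguished, then $X$ is scattered.
   Context: A Tychonoff space is Čech-complete if it is a $G_\delta$-subset of some (equivalently, every) compactification of it. A space $X$ is scattered if every nonempty subset $A\subseteq X$ has a point isolated in $A$. A topological space $X$ is a $\Delta$-space if for every decreasing sequence $\{D_n:n\in\omega\}$ of subsets of $X$ with $\bigcap_n D_n=\emptyset$ there is a decreasing sequence $\{V_n:n\in\omega\}$ of open subsets of $X$ with $D_n\subseteq V_n$ for all $n$ and $\bigcap_n V_n=\emptyset$. $C_p(X)$ is the space of continuous real-valued functions on $X$ with the pointwise convergence topology; a locally convex space is distinguished if its strong dual is barrelled. *)

From HB Require Import structures.
From mathcomp Require Import all_boot all_algebra.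
From mathcomp Require Import all_classical all_reals all_analysis.
From mathcomp Require Import borel_hierarchy.
Set Implicit Arguments. Unset Strict Implicit. Unset Printing Implicit Defensive.
Local Open Scope classical_set_scope.

Definition tychonoff_space (X : topologicalType) : Prop :=
  completely_regular_space X /\ hausdorff_space X.

Definition top_embedding (X K : topologicalType) (e : X -> K) : Prop :=
  continuous e /\ injective e /\
  (forall U : set X, open U ->
     exists2 V : set K, open V & e @` U = V `&` range e).

Definition compactification_of (X K : topologicalType) (e : X -> K) : Prop :=
  compact [set: K] /\ hausdorff_space K /\ top_embedding e /\ dense (range e).

Definition cech_complete (X : topologicalType) : Prop :=
  exists (K : topologicalType) (e : X -> K),
    compactification_of e /\ Gdelta (range e).

Definition isolated_in (X : topologicalType) (A : set X) (x : X) : Prop :=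
  A x /\ exists2 U : set X, open U & U `&` A = [set x].

Definition scattered (X : topologicalType) : Prop :=
  forall A : set X, A !=set0 -> exists x, isolated_in A x.

Definition Delta_space (X : topologicalType) : Prop :=
  forall D : (set X)^nat,
    (forall n, D n.+1 `<=` D n) -> \bigcap_n D n = set0 ->
    exists V : (set X)^nat,
      [/\ forall n, open (V n), forall n, V n.+1 `<=` V n,
          forall n, D n `<=` V n & \bigcap_n V n = set0].

From mathcomp Require Import all_boot all_algebra.
From mathcomp Require Import all_classical all_reals all_analysis.
From mathcomp Require Import borel_hierarchy.
Set Implicit Arguments. Unset Strict Implicit. Unset Printing Implicit Defensive.
Local Open Scope classical_set_scope.

(* Let e : X -> K be a compactification with range e = \bigcap_n G n for open
   sets G n of K, and suppose some nonempty A has no isolated point.  Then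
   S := e @` A is a nonempty dense-in-itself subset of the G_delta set
   \bigcap_n G n.  Inside the compact Hausdorff space K we build a Cantor
   scheme of open sets indexed by finite binary words, with disjoint closures
   of siblings and the closures at level n+1 contained in G n.  Each branch
   f : nat -> bool yields a nonempty compact set B f of \bigcap_n G n.  Let
   D n be the union of the B f over the branches whose last 1 sits at a
   position >= n; the D n decrease and have empty intersection.  Given any
   open W n containing D n, a diagonal argument (extending a prefix by a 1 at
   a late position, then using compactness of B f) produces a nested sequence
   of scheme closures whose common point lies in every W n and every G n.
   On the other hand, the Delta property of X, transported along the
   embedding e, yields such W n with \bigcap_n W n disjoint from range e. *)

Lemma subset_nonincreasing (T : Type) (C : (set T)^nat) :
  (forall n, C n.+1 `<=` C n) -> forall m n, (m <= n)%N -> C n `<=` C m.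
Proof.
move=> dC m n /subnK <-; elim: (n - m)%N => [|k IH] //=.
by rewrite addSn; apply: subset_trans (dC _) IH.
Qed.

Lemma compact_nested_closed (K : topologicalType) (C : (set K)^nat) :
  compact [set: K] -> (forall n, closed (C n)) ->
  (forall n, C n.+1 `<=` C n) -> (forall n, C n !=set0) ->
  \bigcap_n C n !=set0.
Proof.
move=> cK clC dC neC.
have FF : ProperFilter (filter_from [set: nat] C).
  apply: filter_from_proper => //; apply: filter_fromT_filter; first by exists 0%N.
  move=> i j; exists (maxn i j) => x Cx; split.
  - exact: (subset_nonincreasing dC (leq_maxl i j)).
  - exact: (subset_nonincreasing dC (leq_maxr i j)).
have [p [_ clp]] := cK _ FF filterT.
by exists p => n _; apply: clC => B nB; apply: clp => //; exists n.
Qed.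

Lemma compact_closure_nbhs (K : topologicalType) (x : K) (W : set K) :
  compact [set: K] -> hausdorff_space K -> open W -> W x ->
  exists Q : set K, [/\ open Q, Q x & closure Q `<=` W].
Proof.
move=> cK hK oW Wx.
have [D nD cDW] := @compact_regular K x setT hK cK filterT W (open_nbhs_nbhs (conj oW Wx)).
exists D°; split; first exact: open_interior.
  exact: nbhs_singleton (nbhs_interior nD).
by apply: subset_trans cDW; apply: closureS; exact: interior_subset.
Qed.

Definition dense_in_itself (K : topologicalType) (S : set K) : Prop :=
  forall a, S a -> forall U : set K, open U -> U a ->
    exists b, [/\ S b, U b & b <> a].

Lemma split_open (K : topologicalType) (S U : set K) :
  compact [set: K] -> hausdorff_space K -> dense_in_itself S ->
  open U -> U `&` S !=set0 ->
  exists P : bool -> set K, [/\ forall b, open (P b),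
    forall b, P b `&` S !=set0, forall b, closure (P b) `<=` U &
    closure (P true) `&` closure (P false) = set0].
Proof.
move=> cK hK dS oU [a [Ua Sa]].
have [b [Sb Ub ba]] := dS a Sa U oU Ua.
have ab : a != b by apply/eqP => /esym.
have hK' := hK; rewrite open_hausdorff in hK'.
have [[P0 P1] /= [P0a P1b] [oP0 oP1 /eqP P01]] := hK' a b ab.
rewrite inE in P0a; rewrite inE in P1b.
have [Q0 [oQ0 Q0a cQ0]] := compact_closure_nbhs cK hK (openI oU oP0) (conj Ua P0a).
have [Q1 [oQ1 Q1b cQ1]] := compact_closure_nbhs cK hK (openI oU oP1) (conj Ub P1b).
exists (fun c => if c then Q0 else Q1); split.
- by case.
- by case; [exists a | exists b].
- by case=> x /=; [move/cQ0 => [] | move/cQ1 => []].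
- apply/seteqP; split=> x //= [/cQ0 [_ ?] /cQ1 [_ ?]].
  have : (P0 `&` P1) x by split.
  by rewrite P01.
Qed.

Fixpoint scheme (K : Type) (G : (set K)^nat) (split : set K -> bool -> set K)
    (s : seq bool) : set K :=
  if s is b :: s' then split (scheme G split s' `&` G (size s')) b else setT.

Lemma cantor_scheme (K : topologicalType) (S : set K) (G : (set K)^nat) :
  compact [set: K] -> hausdorff_space K -> dense_in_itself S -> S !=set0 ->
  (forall n, open (G n)) -> S `<=` \bigcap_n G n ->
  exists tree : seq bool -> set K, [/\ forall s, tree s !=set0,
    forall b s, closure (tree (b :: s)) `<=` tree s `&` G (size s) &
    forall s, closure (tree (true :: s)) `&` closure (tree (false :: s)) = set0].
Proof.
move=> cK hK dS [a0 Sa0] oG SG.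
have split_exists U : exists P : bool -> set K,
    open U -> U `&` S !=set0 -> [/\ forall b, open (P b),
      forall b, P b `&` S !=set0, forall b, closure (P b) `<=` U &
      closure (P true) `&` closure (P false) = set0].
  have [[oU SU]|nU] := pselect (open U /\ U `&` S !=set0).
    by have [P HP] := split_open cK hK dS oU SU; exists P.
  by exists (fun=> set0) => oU SU; case: nU.
have [split Hsplit] := choice split_exists.
have Hlevel s : open (scheme G split s `&` G (size s)) /\
    scheme G split s `&` G (size s) `&` S !=set0.
  elim: s => [|b s [oU SU]] /=.
    by split; [exact: openI openT (oG 0%N) | exists a0; do !split=> //; exact: SG].
  have [oP SP _ _] := Hsplit _ oU SU.
  split; first exact: openI (oP b) (oG _).
  by have [x [Px Sx]] := SP b; exists x; do !split=> //; exact: SG.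
exists (scheme G split); split.
- move=> s; have [_ [x [[? _] _]]] := Hlevel s; by exists x.
- by move=> b s; have [_ _ cP _] := Hsplit _ (Hlevel s).1 (Hlevel s).2; exact: cP.
- by move=> s; have [_ _ _ disj] := Hsplit _ (Hlevel s).1 (Hlevel s).2.
Qed.

(* The length-n prefix of a branch f, as a word read from position n-1 down
   to 0 (the order in which scheme words are built). *)
Fixpoint prefix (f : nat -> bool) (n : nat) : seq bool :=
  if n is n'.+1 then f n' :: prefix f n' else [::].

Lemma size_prefix f n : size (prefix f n) = n.
Proof. by elim: n => //= n ->. Qed.

Lemma eq_prefix f g n :
  (forall k, (k < n)%N -> f k = g k) -> prefix f n = prefix g n.
Proof.
elim: n => //= n IH fg; rewrite fg // IH // => k kn; exact/fg/ltnW.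
Qed.

Definition last_one (m : nat) (f : nat -> bool) : Prop :=
  f m /\ forall k, (m < k)%N -> f k = false.

Section Branches.
Variables (K : topologicalType) (G : (set K)^nat) (tree : seq bool -> set K).
Hypothesis cK : compact [set: K].
Hypothesis tree_nonempty : forall s, tree s !=set0.
Hypothesis tree_child :
  forall b s, closure (tree (b :: s)) `<=` tree s `&` G (size s).
Hypothesis tree_split :
  forall s, closure (tree (true :: s)) `&` closure (tree (false :: s)) = set0.

Let T f n := closure (tree (prefix f n)).

Definition branch f := \bigcap_n T f n.

Lemma branch_closed f n : closed (T f n).
Proof. exact: closed_closure. Qed.

Lemma branch_nonempty f n : T f n !=set0.
Proof.
by have [x tx] := tree_nonempty (prefix f n); exists x; exact: subset_closure.
Qed.

Lemma branch_step f n : T f n.+1 `<=` T f n.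
Proof. by move=> x /tree_child [tx _]; exact: subset_closure. Qed.

Lemma branch_G f n : T f n.+1 `<=` G n.
Proof. by move=> x /tree_child [_]; rewrite size_prefix. Qed.

Lemma branch_sub_G f : branch f `<=` \bigcap_n G n.
Proof. by move=> x Bx n _; exact: branch_G (Bx n.+1 I). Qed.

Lemma tree_disjoint s t : size s = size t -> s <> t ->
  closure (tree s) `&` closure (tree t) = set0.
Proof.
elim: s t => [|b s IH] [|c t] //= [st] bst.
have [est|nst] := pselect (s = t); last first.
  apply/seteqP; split=> x //= [/tree_child [sx _] /tree_child [tx _]].
  have : (closure (tree s) `&` closure (tree t)) x.
    by split; exact: subset_closure.
  by rewrite IH.
subst t; have {bst} bc : b <> c by move=> bc; apply: bst; rewrite bc.
case: b c bc => [] [] bc; try by case: bc.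
  exact: tree_split.
by rewrite setIC; exact: tree_split.
Qed.

Lemma branch_disjoint f g k : f k <> g k -> T f k.+1 `&` T g k.+1 = set0.
Proof.
by move=> fg; apply: tree_disjoint; [rewrite !size_prefix | case].
Qed.

Lemma branch_approx f (O : set K) :
  open O -> branch f `<=` O -> exists j, T f j `<=` O.
Proof.
move=> oO BO; apply: contrapT => noj.
have ne j : (T f j `&` ~` O) !=set0.
  apply: contrapT => h; apply: noj; exists j => y Ty.
  by apply: contrapT => nOy; apply: h; exists y.
have [y Cy] := compact_nested_closed cK
  (fun j => closedI (@branch_closed f j) (open_closedC oO))
  (fun j x '(conj Tx nOx) => conj (branch_step Tx) nOx) ne.
have [_ nOy] := Cy 0%N I; apply: nOy; apply: BO => j _.
by have [] := Cy j I.
Qed.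

Definition tail_union n : set K :=
  [set y | exists m f, [/\ (n <= m)%N, last_one m f & branch f y]].

Lemma tail_union_step n : tail_union n.+1 `<=` tail_union n.
Proof. by move=> y [m [f [nm ? ?]]]; exists m, f; split => //; exact: ltnW. Qed.

Lemma tail_union_sub_G n : tail_union n `<=` \bigcap_k G k.
Proof. by move=> y [m [f [_ _ /branch_sub_G]]]. Qed.

(* A point of every tail union would lie on two branches with different
   last 1, which are separated by the scheme. *)
Lemma bigcap_tail_union : \bigcap_n tail_union n = set0.
Proof.
apply/seteqP; split=> y //= Dy.
have [m0 [f0 [_ [_ f0_tail] B0]]] := Dy 0%N I.
have [m1 [f1 [m0m1 [f1m1 _] B1]]] := Dy m0.+1 I.
have : (T f0 m1.+1 `&` T f1 m1.+1) y by split; [exact: B0 | exact: B1].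
by rewrite branch_disjoint // f1m1 f0_tail.
Qed.

Lemma extend_into (W : set K) n f L : open W -> tail_union n `<=` W ->
  exists gj : (nat -> bool) * nat,
    [/\ (L < gj.2)%N, prefix gj.1 L = prefix f L & T gj.1 gj.2 `<=` W].
Proof.
move=> oW DW; pose m := maxn L n.
pose g k := if (k < L)%N then f k else (k == m).
have g_last : last_one m g.
  split; first by rewrite /g ltnNge leq_maxl /= eqxx.
  move=> k mk; rewrite /g ifF; last by apply/negbTE; rewrite -leqNgt;
    apply: leq_trans (ltnW mk); exact: leq_maxl.
  by apply/negbTE; rewrite neq_ltn mk orbT.
have [j Tj] : exists j, T g j `<=` W.
  by apply: branch_approx oW _ => y By; apply: DW; exists m, g; rewrite leq_maxr.
exists (g, maxn j L.+1); split => /=; first exact: leq_maxr.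
  by apply: eq_prefix => k kL; rewrite /g kL.
apply: subset_trans Tj; apply: (subset_nonincreasing (@branch_step g)).
exact: leq_maxl.
Qed.

(* The tail unions cannot be separated from \bigcap_n G n by open sets:
   iterating extend_into with W 0, W 1, ... gives nested scheme closures of
   growing depth whose common point lies in every W n and every G n. *)
Lemma tail_union_inseparable (W : (set K)^nat) :
  (forall n, open (W n)) -> (forall n, tail_union n `<=` W n) ->
  \bigcap_n W n `&` \bigcap_n G n !=set0.
Proof.
move=> oW DW.
have [next Hnext] := choice (fun p : nat * ((nat -> bool) * nat) =>
  extend_into p.2.1 p.2.2 (oW p.1) (DW p.1)).
pose sq n := iteri n (fun i p => next (i, p)) ((fun=> false), 0%N).
have sqS n : sq n.+1 = next (n, sq n) by [].
have sq_depth n : (n <= (sq n).2)%N.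
  elim: n => // n IH; rewrite sqS; have [lt _ _] := Hnext (n, sq n).
  exact: leq_ltn_trans IH lt.
pose C n := T (sq n).1 (sq n).2.
have C_step n : C n.+1 `<=` C n.
  rewrite /C sqS; have [lt eqp _] := Hnext (n, sq n).
  apply: subset_trans; first exact: (subset_nonincreasing (@branch_step _) (ltnW lt)).
  by rewrite /T eqp.
have [y Cy] := compact_nested_closed cK (fun n => @branch_closed _ _) C_step
  (fun n => @branch_nonempty _ _).
exists y; split => n _.
- by have [_ _ CW] := Hnext (n, sq n); apply: CW; rewrite -sqS; exact: Cy.
- apply: (@branch_G (sq n.+1).1).
  exact: (subset_nonincreasing (@branch_step _) (sq_depth n.+1) (Cy n.+1 I)).
Qed.

End Branches.

Theorem Gdelta_not_Delta (K : topologicalType) (S : set K) (G : (set K)^nat) :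
  compact [set: K] -> hausdorff_space K -> dense_in_itself S -> S !=set0 ->
  (forall n, open (G n)) -> S `<=` \bigcap_n G n ->
  exists D : (set K)^nat, [/\ forall n, D n.+1 `<=` D n,
    forall n, D n `<=` \bigcap_k G k, \bigcap_n D n = set0 &
    forall W : (set K)^nat, (forall n, open (W n)) ->
      (forall n, D n `<=` W n) -> \bigcap_n W n `&` \bigcap_n G n !=set0].
Proof.
move=> cK hK dS S0 oG SG.
have [tree [tree_ne tree_child tree_split]] := cantor_scheme cK hK dS S0 oG SG.
exists (tail_union tree); split.
- by move=> n; exact: tail_union_step.
- by move=> n; exact: tail_union_sub_G.
- exact: bigcap_tail_union.
- by move=> W; exact: tail_union_inseparable.
Qed.

Lemma Delta_embedding (X K : topologicalType) (e : X -> K) :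
  top_embedding e -> Delta_space X ->
  forall D : (set K)^nat, (forall n, D n.+1 `<=` D n) ->
    (forall n, D n `<=` range e) -> \bigcap_n D n = set0 ->
  exists W : (set K)^nat, [/\ forall n, open (W n),
    forall n, D n `<=` W n & \bigcap_n W n `&` range e = set0].
Proof.
move=> [_ [ie emb]] Del D dD De D0.
have [|V [oV _ DV V0]] := Del (fun n => e @^-1` D n) (fun n x => @dD n (e x)).
  apply/seteqP; split=> x //= Dx.
  have : (\bigcap_n D n) (e x) by move=> n _; exact: Dx.
  by rewrite D0.
have hW n : exists Wn : set K, open Wn /\ e @` V n = Wn `&` range e.
  by have [Wn oWn eV] := emb _ (oV n); exists Wn.
have [W HW] := choice hW.
exists W; split.
- by move=> n; exact: (HW n).1.
- move=> n y Dy; have [x _ exy] := De n y Dy; subst y.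
  have : (e @` V n) (e x) by exists x => //; exact: DV.
  by rewrite (HW n).2 => -[].
- apply/seteqP; split=> y //= [Wy [x _ exy]]; subst y.
  have Vx n : V n x.
    have : (W n `&` range e) (e x) by split; [exact: Wy | exists x].
    by rewrite -(HW n).2 => -[x' Vx' /ie <-].
  have : (\bigcap_n V n) x by move=> n _; exact: Vx.
  by rewrite V0.
Qed.

Lemma no_isolated_dense_in_itself (X : topologicalType) (A : set X) :
  ~ (exists x, isolated_in A x) -> dense_in_itself A.
Proof.
move=> noiso a Aa O oO Oa; apply: contrapT => nb; apply: noiso.
exists a; split => //; exists O => //; apply/seteqP; split=> x /=; last by move=> ->.
by move=> [Ox Ax]; apply: contrapT => xa; apply: nb; exists x.
Qed.

Lemma dense_in_itself_image (X K : topologicalType) (e : X -> K) (A : set X) :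
  continuous e -> injective e -> dense_in_itself A -> dense_in_itself (e @` A).
Proof.
move=> ce ie dA _ [a Aa <-] U oU Uea.
have oeU : open (e @^-1` U) by move/continuousP: ce; apply.
have [b [Ab Ub ba]] := dA a Aa _ oeU Uea.
exists (e b); split; [by exists b | exact: Ub | by move/ie].
Qed.

Theorem theorem3p4 (X : topologicalType) :
  tychonoff_space X -> cech_complete X -> Delta_space X -> scattered X.
Proof.
move=> _ [K [e [[cK [hK [emb _]]] [G oG rG]]]] Del A A0.
apply: contrapT => noiso; have [ce [ie _]] := emb.
have dA : dense_in_itself (e @` A).
  exact: dense_in_itself_image ce ie (no_isolated_dense_in_itself noiso).
have AG : e @` A `<=` \bigcap_n G n by rewrite -rG => _ [a _ <-]; exists a.
have [D [dD DG D0 D_insep]] := Gdelta_not_Delta cK hK dA (image_nonempty e A0) oG AG.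
have De n : D n `<=` range e by rewrite rG; exact: DG.
have [W [oW DW W0]] := Delta_embedding emb Del dD De D0.
have := D_insep W oW DW.
by rewrite -rG W0; case.
Qed.
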